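(* Let $V\ge3$, $I_1<I_2<I_3$, and suppose $x_2=I_2-I_1$ and $x_3=I_3-I_1$ are incommensurable ($x_2/x_3\notin\mathbb{Q}$). Let $\rho$ be a continuous, strictly positive probability density on $\mathbb{R}_+$ such that the system $(\rho_1,\rho_2,\rho_3)=(\rho,\rho,\rho)$ is admissible. Then there is $\beta>0$ with $\rho(T)=\beta e^{-\beta T}$ for all $T\ge0$.
   Context: For $I_v<I_w$, a pair of densities $(\rho_v,\rho_w)$ on $\mathbb{R}_+$ with corresponding random variables $\xi_v,\xi_w$ is admissible if the conditional density of $\xi_v-(I_w-I_v)$ given $\{\xi_v>I_w-I_v\}$ equals $\rho_w$. A system $(\rho_1,\dots,\rho_V)$ is admissible if each consecutive pair $(\rho_v,\rho_{v+1})$ is admissible. *)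

From Stdlib Require Import Reals Lra QArith Qreals.
Open Scope R_scope.

Definition integral_eq (f : R -> R) (a b l : R) : Prop :=
  exists pr : Riemann_integrable f a b, RiemannInt pr = l.

Definition tail_integral (f : R -> R) (a l : R) : Prop :=
  (forall b, a <= b -> exists pr : Riemann_integrable f a b, True) /\
  (forall eps, 0 < eps -> exists M, forall b, M <= b -> a <= b ->
      forall pr : Riemann_integrable f a b, Rabs (RiemannInt pr - l) < eps).

Definition continuous_on_Rplus (f : R -> R) : Prop :=
  forall x, 0 <= x -> limit1_in f (fun y => 0 <= y) (f x) x.

Definition prob_density_Rplus (f : R -> R) : Prop :=
  (forall T, 0 <= T -> 0 <= f T) /\ tail_integral f 0 1.

(* Admissible pair (rho_v, rho_w) for I_v < I_w: with d = I_w - I_v,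
   S = P(xi_v > d) = \int_d^oo rho_v > 0 and the conditional density of
   xi_v - d given xi_v > d, namely T |-> rho_v (T + d) / S, equals rho_w
   (pointwise on R_+). *)
Definition admissible_pair (Iv Iw : R) (rhov rhow : R -> R) : Prop :=
  Iv < Iw /\
  exists S, tail_integral rhov (Iw - Iv) S /\ 0 < S /\
    forall T, 0 <= T -> rhow T = rhov (T + (Iw - Iv)) / S.

Definition admissible_system (V : nat) (I : nat -> R) (rho : nat -> R -> R) : Prop :=
  forall v : nat, (1 <= v)%nat -> (v < V)%nat ->
    admissible_pair (I v) (I (S v)) (rho v) (rho (S v)).

Definition incommensurable (x y : R) : Prop :=
  ~ exists q : Q, x / y = Q2R q.

From Stdlib Require Import Reals QArith Qreals Lra Lia ZArith Classical.
From Coquelicot Require Import Coquelicot.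
Open Scope R_scope.

(* Admissibility of the two consecutive pairs says that, with [a = I2 - I1]
   and [b = I3 - I2], [rho (T + a) = Sa rho T] and [rho (T + b) = Sb rho T]
   on [R_+].  Setting [c = ln Sa / a], the function [h T = ln (rho T) - c T]
   is [a]-periodic and satisfies [h (T + b) = h T + d].  Since
   [a / (a + b)] is irrational, the lattice [a Z + b Z] has arbitrarily small
   positive elements (a subgroup of [R] is dense or cyclic); continuity of
   [h] then forces [d = 0] and [h] constant, i.e. [rho T = rho 0 exp (c T)].
   Finally, total mass [1] forces [c < 0] and [rho 0 = - c]. *)

Section AdditiveSubgroup.

Variable G : R -> Prop.
Hypothesis G_sub : forall x y, G x -> G y -> G (x - y).
Hypothesis G_zmul : forall (k : Z) x, G x -> G (IZR k * x).

(* If [G] has arbitrarily small positive elements, it meets every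
   interval [(T, T + del)]: some integer multiple of a small element does. *)
Lemma subgroup_dense :
  (forall eps, 0 < eps -> exists g, G g /\ 0 < g < eps) ->
  forall T del, 0 < del -> exists x, G x /\ T < x < T + del.
Proof.
  intros Hsmall T del Hdel.
  destruct (Hsmall del Hdel) as [g [Hg [Hg0 Hgdel]]].
  destruct (archimed (T / g)) as [Hup1 Hup2].
  exists (IZR (up (T / g)) * g); split; [now apply G_zmul|].
  assert (Hdiv : T = (T / g) * g) by (field; lra).
  set (q := T / g) in *. set (k := IZR (up q)) in *.
  split; nra.
Qed.

(* An infimum [g0 > 0] of the positive elements of [G] is attained:
   two positive elements within [g0] of the infimum would differ by a
   positive element smaller than [g0]. *)
Lemma subgroup_inf_mem g0 : 0 < g0 ->
  (forall g, G g -> 0 < g -> g0 <= g) ->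
  (forall eps, 0 < eps -> exists g, G g /\ 0 < g < g0 + eps) ->
  G g0.
Proof.
  intros Hg0 Hlow Happrox.
  destruct (Happrox g0 Hg0) as [g1 [Hg1 [Hg1pos Hg1lt]]].
  destruct (Req_dec g1 g0) as [<-|Hne]; [exact Hg1|].
  pose proof (Hlow g1 Hg1 Hg1pos).
  destruct (Happrox (g1 - g0)) as [g2 [Hg2 [Hg2pos Hg2lt]]]; [lra|].
  pose proof (Hlow g2 Hg2 Hg2pos).
  pose proof (Hlow (g1 - g2) (G_sub _ _ Hg1 Hg2)). lra.
Qed.

(* If [g0] is the least positive element of [G], then [G] is [g0 Z]:
   the remainder of [x] modulo [g0] lies in [G] and in [[0, g0)]. *)
Lemma subgroup_cyclic g0 : G g0 -> 0 < g0 ->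
  (forall g, G g -> 0 < g -> g0 <= g) ->
  forall x, G x -> x = IZR (Zfloor (x / g0)) * g0.
Proof.
  intros Hg0 Hg0pos Hlow x Hx.
  destruct (Zfloor_bound (x / g0)) as [Hfl1 Hfl2].
  set (k := Zfloor (x / g0)) in *.
  assert (Hdiv : x = (x / g0) * g0) by (field; lra).
  assert (Hrem : 0 <= x - IZR k * g0 < g0)
    by (set (q := x / g0) in *; split; nra).
  destruct (Req_dec x (IZR k * g0)) as [|Hne]; [assumption|].
  pose proof (Hlow _ (G_sub _ _ Hx (G_zmul k _ Hg0))). lra.
Qed.

Lemma subgroup_dichotomy : (exists x, G x /\ 0 < x) ->
  (forall eps, 0 < eps -> exists g, G g /\ 0 < g < eps) \/
  (exists g0, 0 < g0 /\ forall x, G x -> exists k : Z, x = IZR k * g0).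
Proof.
  intros [x0 [Hx0 Hx0pos]].
  (* The infimum of the positive elements, as minus a supremum. *)
  set (E := fun y => exists g, G g /\ 0 < g /\ y = - g).
  assert (Hbound : bound E) by (exists 0; intros y [g [_ [Hg ->]]]; lra).
  assert (Hnonempty : exists y, E y) by (exists (- x0), x0; auto).
  destruct (completeness E Hbound Hnonempty) as [m [Hub Hlub]].
  assert (Hlow : forall g, G g -> 0 < g -> - m <= g).
  { intros g Hg Hgpos. enough (- g <= m) by lra. apply Hub. now exists g. }
  assert (Happrox : forall eps, 0 < eps -> exists g, G g /\ 0 < g < - m + eps).
  { intros eps Heps. apply NNPP. intros Hnone.
    enough (m <= m - eps) by lra. apply Hlub. intros y [g [Hg [Hgpos ->]]].
    destruct (Rle_lt_dec (- g) (m - eps)) as [|Hlt]; [assumption|].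
    exfalso. apply Hnone. exists g. repeat split; auto; lra. }
  assert (Hm : m <= 0) by (apply Hlub; intros y [g [_ [Hg ->]]]; lra).
  destruct (Req_dec m 0) as [Hm0|Hm0].
  - left. intros eps Heps. destruct (Happrox eps Heps) as [g [Hg Hgeps]].
    exists g. split; [exact Hg|lra].
  - right. exists (- m). split; [lra|].
    assert (Hmem : G (- m)) by (apply subgroup_inf_mem; auto; lra).
    intros x Hx. eexists. apply subgroup_cyclic; auto; lra.
Qed.

End AdditiveSubgroup.

Definition lattice (a b x : R) : Prop := exists m n : Z, x = IZR m * a + IZR n * b.

Lemma lattice_sub a b x y : lattice a b x -> lattice a b y -> lattice a b (x - y).
Proof.
  intros [m1 [n1 ->]] [m2 [n2 ->]]. exists (m1 - m2)%Z, (n1 - n2)%Z.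
  rewrite !minus_IZR; ring.
Qed.

Lemma lattice_zmul a b k x : lattice a b x -> lattice a b (IZR k * x).
Proof.
  intros [m [n ->]]. exists (k * m)%Z, (k * n)%Z. rewrite !mult_IZR; ring.
Qed.

(* For incommensurable periods the lattice has arbitrarily small positive
   elements: were it cyclic, [a = p g0], [b = q g0] and [a / (a + b)] would
   be the rational [p / (p + q)]. *)
Lemma lattice_small a b : 0 < a -> 0 < b -> incommensurable a (a + b) ->
  forall eps, 0 < eps -> exists g, lattice a b g /\ 0 < g < eps.
Proof.
  intros Ha Hb Hinc.
  assert (Ha_lat : lattice a b a) by (exists 1%Z, 0%Z; ring).
  assert (Hb_lat : lattice a b b) by (exists 0%Z, 1%Z; ring).
  destruct (subgroup_dichotomy (lattice a b) (lattice_sub a b) (lattice_zmul a b))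
    as [Hsmall|[g0 [Hg0 Hcyc]]]; [now exists a|exact Hsmall|exfalso].
  destruct (Hcyc a Ha_lat) as [p Hp]. destruct (Hcyc b Hb_lat) as [q Hq].
  assert (Hpq : 0 < IZR p + IZR q) by nra.
  apply Hinc. exists (Qmake p (Z.to_pos (p + q))).
  unfold Q2R; simpl. rewrite Z2Pos.id by (apply lt_IZR; rewrite plus_IZR; exact Hpq).
  rewrite Hp, Hq, plus_IZR. field. lra.
Qed.

Lemma shift_nat (h : R -> R) (s e : R) : 0 < s ->
  (forall x, 0 <= x -> h (x + s) = h x + e) ->
  forall (k : nat) y, 0 <= y -> h (y + INR k * s) = h y + INR k * e.
Proof.
  intros Hs Hshift k y Hy. induction k as [|k IH].
  - simpl. rewrite !Rmult_0_l, !Rplus_0_r. reflexivity.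
  - rewrite S_INR. replace (y + (INR k + 1) * s) with (y + INR k * s + s) by ring.
    pose proof (pos_INR k). rewrite Hshift, IH by nra. ring.
Qed.

Lemma shift_int (h : R -> R) (s e : R) : 0 < s ->
  (forall x, 0 <= x -> h (x + s) = h x + e) ->
  forall (k : Z) y, 0 <= y -> 0 <= y + IZR k * s -> h (y + IZR k * s) = h y + IZR k * e.
Proof.
  intros Hs Hshift k y Hy Hyk. destruct (Z_le_gt_dec 0 k) as [Hk|Hk].
  - rewrite <- (Z2Nat.id k Hk), <- INR_IZR_INZ. now apply shift_nat.
  - (* Shift back from [y + k s] by [- k] steps. *)
    pose proof (shift_nat h s e Hs Hshift (Z.to_nat (- k)) _ Hyk) as Hback.
    rewrite INR_IZR_INZ, Z2Nat.id, opp_IZR in Hback by lia.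
    replace (y + IZR k * s + - IZR k * s) with y in Hback by ring. lra.
Qed.

Section QuasiPeriodic.

Variables (h : R -> R) (a b d : R).
Hypothesis a_pos : 0 < a.
Hypothesis b_pos : 0 < b.
Hypothesis h_shift_a : forall x, 0 <= x -> h (x + a) = h x.
Hypothesis h_shift_b : forall x, 0 <= x -> h (x + b) = h x + d.

(* On a nonnegative lattice point [m a + n b], [h] has moved by [n d]
   from [h 0]; go first along whichever generator keeps us in [R_+]. *)
Lemma quasi_periodic_lattice (m n : Z) : 0 <= IZR m * a + IZR n * b ->
  h (IZR m * a + IZR n * b) = h 0 + IZR n * d.
Proof.
  intros Hpos.
  assert (Ha : forall x, 0 <= x -> h (x + a) = h x + 0) by (intros; rewrite Rplus_0_r; auto).
  pose proof (shift_int h a 0 a_pos Ha) as Hma.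
  pose proof (shift_int h b d b_pos h_shift_b) as Hnb.
  destruct (Rle_lt_dec 0 (IZR m)) as [Hm|Hm].
  - rewrite (Hnb n (IZR m * a)) by nra.
    rewrite <- (Rplus_0_l (IZR m * a)), Hma by nra. ring.
  - rewrite (Rplus_comm (IZR m * a)), (Hma m (IZR n * b)) by nra.
    rewrite <- (Rplus_0_l (IZR n * b)), Hnb by nra. ring.
Qed.

Hypothesis h_cont : forall T, 0 <= T -> limit1_in h (fun y => 0 <= y) (h T) T.
Hypothesis lattice_small_elems :
  forall eps, 0 < eps -> exists g, lattice a b g /\ 0 < g < eps.

(* Continuity at [0] forces [d = 0]: a lattice point [m a + n b] in
   [(0, a)] close to [0] must have [n = 0], hence is [m a] with [0 < m < 1]. *)
Lemma quasi_period_zero : d = 0.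
Proof.
  apply NNPP. intros Hd.
  assert (Hd2 : 0 < Rabs d / 2) by (pose proof (Rabs_pos_lt d Hd); lra).
  destruct (h_cont 0 (Rle_refl 0) _ Hd2) as [del [Hdel Hnear]].
  destruct (lattice_small_elems (Rmin del a)) as [g [[m [n Hg]] [Hg0 Hgmin]]];
    [now apply Rmin_pos|].
  pose proof (Rmin_l del a). pose proof (Rmin_r del a).
  assert (Hclose : Rabs (IZR n * d) < Rabs d / 2).
  { replace (IZR n * d) with (h g - h 0)
      by (rewrite Hg, quasi_periodic_lattice by lra; ring).
    apply Hnear. split; [lra|]. simpl. unfold R_dist.
    rewrite Rminus_0_r, Rabs_right; lra. }
  assert (Hn : n = 0%Z).
  { apply one_IZR_lt1. rewrite Rabs_mult in Hclose.
    pose proof (Rabs_pos_lt d Hd).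
    assert (Hn1 : Rabs (IZR n) < 1) by nra.
    apply Rabs_def2 in Hn1. lra. }
  subst n. rewrite Rmult_0_l, Rplus_0_r in Hg.
  assert (Hm : m = 0%Z) by (apply one_IZR_lt1; split; nra).
  subst m. lra.
Qed.

(* Hence [h] is constant on the nonnegative lattice points, which are dense
   in [R_+]; continuity makes [h] constant on [R_+]. *)
Lemma quasi_periodic_const : forall T, 0 <= T -> h T = h 0.
Proof.
  intros T HT. apply NNPP. intros Hne.
  assert (Hgap : 0 < Rabs (h T - h 0)) by (apply Rabs_pos_lt; lra).
  destruct (h_cont T HT _ Hgap) as [del [Hdel Hnear]].
  destruct (subgroup_dense (lattice a b) (lattice_zmul a b) lattice_small_elems T del Hdel)
    as [x [[m [n ->]] Hx]].
  assert (Hlat : h (IZR m * a + IZR n * b) = h 0)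
    by (rewrite quasi_periodic_lattice, quasi_period_zero by lra; ring).
  assert (Hclose : Rabs (h (IZR m * a + IZR n * b) - h T) < Rabs (h T - h 0)).
  { apply Hnear. split; [lra|]. simpl. unfold R_dist.
    rewrite Rabs_right; lra. }
  rewrite Hlat, Rabs_minus_sym in Hclose. lra.
Qed.

End QuasiPeriodic.

Lemma limit1_in_ln (f : R -> R) (D : R -> Prop) (l x : R) : 0 < l ->
  (forall y, D y -> 0 < f y) -> limit1_in f D l x ->
  limit1_in (fun y => ln (f y)) D (ln l) x.
Proof.
  intros Hl Hpos Hf eps Heps.
  destruct (ln_continue l Hl eps Heps) as [alp [Halp Hln]].
  destruct (Hf alp Halp) as [del [Hdel Hnear]].
  exists del. split; [exact Hdel|]. intros y [Hy Hyx].
  destruct (Req_dec (f y) l) as [->|Hne].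
  - simpl. unfold R_dist. rewrite Rminus_diag, Rabs_R0. lra.
  - apply Hln. split; [split; [now apply Hpos|now apply not_eq_sym]|].
    now apply Hnear.
Qed.

(* Indeed [h T = ln (rho T) - c T] with [c = ln Sa / a] is [a]-periodic and
   [b]-quasi-periodic, hence constant. *)
Lemma shift_laws_exponential (rho : R -> R) (a b Sa Sb : R) :
  0 < a -> 0 < b -> incommensurable a (a + b) ->
  continuous_on_Rplus rho -> (forall T, 0 <= T -> 0 < rho T) ->
  (forall T, 0 <= T -> rho (T + a) = Sa * rho T) ->
  (forall T, 0 <= T -> rho (T + b) = Sb * rho T) ->
  forall T, 0 <= T -> rho T = rho 0 * exp (ln Sa / a * T).
Proof.
  intros Ha Hb Hinc Hcont Hpos Hra Hrb.
  (* The multipliers are positive, being ratios of values of [rho]. *)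
  assert (HSpos : forall S s, 0 < s ->
    (forall T, 0 <= T -> rho (T + s) = S * rho T) -> 0 < S).
  { intros S s Hs Hrs.
    pose proof (Hpos 0 (Rle_refl 0)) as Hrho0. pose proof (Hpos s (Rlt_le _ _ Hs)) as Hrhos.
    rewrite <- (Rplus_0_l s), Hrs in Hrhos by lra. nra. }
  pose proof (HSpos Sa a Ha Hra) as HSa. pose proof (HSpos Sb b Hb Hrb) as HSb.
  set (c := ln Sa / a).
  set (h := fun T => ln (rho T) - c * T).
  assert (Hha : forall x, 0 <= x -> h (x + a) = h x).
  { intros x Hx. unfold h. rewrite Hra, ln_mult by (auto; apply Hpos; auto).
    unfold c. field. lra. }
  assert (Hhb : forall x, 0 <= x -> h (x + b) = h x + (ln Sb - c * b)).
  { intros x Hx. unfold h. rewrite Hrb, ln_mult by (auto; apply Hpos; auto). ring. }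
  assert (Hhcont : forall T, 0 <= T -> limit1_in h (fun y => 0 <= y) (h T) T).
  { intros T HT. apply limit_minus.
    - apply limit1_in_ln; [now apply Hpos|exact Hpos|now apply Hcont].
    - apply limit_mul; [apply limit_free|apply lim_x]. }
  intros T HT.
  pose proof (quasi_periodic_const h a b _ Ha Hb Hha Hhb Hhcont
    (lattice_small a b Ha Hb Hinc) T HT) as Hconst.
  unfold h in Hconst. rewrite Rmult_0_r, Rminus_0_r in Hconst.
  rewrite <- (exp_ln (rho T)) by auto.
  replace (ln (rho T)) with (ln (rho 0) + c * T) by lra.
  rewrite exp_plus, (exp_ln (rho 0)); [reflexivity|now apply Hpos; lra].
Qed.

Lemma tail_integral_is_lim (f : R -> R) (l : R) :
  tail_integral f 0 l -> is_lim (fun b => RInt f 0 b) p_infty l.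
Proof.
  intros [Hex Hlim]. apply is_lim_spec. intros eps.
  destruct (Hlim eps (cond_pos eps)) as [M HM].
  exists (Rmax M 0). intros b Hb.
  pose proof (Rmax_l M 0). pose proof (Rmax_r M 0).
  destruct (Hex b ltac:(lra)) as [pr _].
  rewrite (RInt_Reals f 0 b pr). apply HM; lra.
Qed.

Lemma RInt_exp (K c b : R) : c <> 0 ->
  RInt (fun x => K * exp (c * x)) 0 b = K / c * (exp (c * b) - 1).
Proof.
  intros Hc. apply is_RInt_unique.
  replace (K / c * (exp (c * b) - 1))
    with (minus ((fun x => K / c * exp (c * x)) b) ((fun x => K / c * exp (c * x)) 0))
    by (unfold minus, plus, opp; simpl; rewrite Rmult_0_r, exp_0; ring).
  apply (is_RInt_derive (fun x => K / c * exp (c * x))).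
  - intros x _. auto_derive; auto. field. exact Hc.
  - intros x _. apply (ex_derive_continuous (fun x => K * exp (c * x))). auto_derive; auto.
Qed.

(* A density [K exp (c T)] on [R_+] with [K > 0] has [c < 0] and total mass
   [K / (- c)]; mass [1] forces [K = - c].  For [c >= 0] the integrals over
   [[0, b]] are at least [K b] and diverge. *)
Lemma exponential_density (rho : R -> R) (K c : R) : 0 < K ->
  (forall T, 0 <= T -> rho T = K * exp (c * T)) ->
  tail_integral rho 0 1 -> c < 0 /\ K = - c.
Proof.
  intros HK Hrho Htail.
  set (F := fun b => RInt (fun x => K * exp (c * x)) 0 b).
  assert (HF1 : is_lim F p_infty 1).
  { apply (is_lim_ext_loc (fun b => RInt rho 0 b)); [|now apply tail_integral_is_lim].
    exists 0. intros b Hb. apply RInt_ext. intros x Hx.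
    rewrite Rmin_left, Rmax_right in Hx by lra. apply Hrho. lra. }
  destruct (Rlt_le_dec c 0) as [Hc|Hc].
  - split; [exact Hc|].
    assert (HFlim : is_lim F p_infty (K / c * (0 - 1))).
    { apply (is_lim_ext (fun b => K / c * (exp (c * b) - 1))).
      { intros b. unfold F. rewrite RInt_exp; [reflexivity|lra]. }
      apply (is_lim_scal_l _ (K / c) p_infty (0 - 1)).
      apply is_lim_minus'; [|apply is_lim_const].
      apply (is_lim_comp exp (fun b => c * b) p_infty 0 m_infty is_lim_exp_m).
      - apply is_lim_spec. intros M. exists (M / c). intros b Hb.
        apply Rmult_lt_compat_l with (r := - c) in Hb; [|lra].
        replace (- c * (M / c)) with (- M) in Hb by (field; lra). lra.
      - exists 0. intros b _. discriminate. }
    apply is_lim_unique in HF1. apply is_lim_unique in HFlim.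
    rewrite HF1 in HFlim. injection HFlim as Hmass.
    apply (Rmult_eq_compat_r c) in Hmass. field_simplify in Hmass; lra.
  - exfalso.
    assert (HFinf : is_lim F p_infty p_infty).
    { apply (is_lim_le_p_loc (fun b => K * b)).
      - exists 0. intros b Hb. unfold F.
        replace (K * b) with (RInt (fun _ => K) 0 b)
          by (rewrite RInt_const; unfold scal; simpl; unfold mult; simpl; ring).
        apply RInt_le; [lra|apply ex_RInt_const| |].
        + apply (@ex_RInt_continuous R_CompleteNormedModule). intros x _.
          apply (ex_derive_continuous (fun x => K * exp (c * x))). auto_derive; auto.
        + intros x Hx. assert (0 <= c * x) by (apply Rmult_le_pos; lra).
          pose proof (exp_ineq1_le (c * x)). nra.
      - apply is_lim_spec. intros M. exists (M / K). intros b Hb.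
        apply Rmult_lt_compat_l with (r := K) in Hb; [|lra].
        replace (K * (M / K)) with M in Hb by (field; lra). lra. }
    apply is_lim_unique in HF1. apply is_lim_unique in HFinf.
    rewrite HF1 in HFinf. discriminate.
Qed.

Theorem theorem6 (I : nat -> R) (rho : R -> R) :
  I 1%nat < I 2%nat -> I 2%nat < I 3%nat ->
  incommensurable (I 2%nat - I 1%nat) (I 3%nat - I 1%nat) ->
  continuous_on_Rplus rho ->
  (forall T, 0 <= T -> 0 < rho T) ->
  prob_density_Rplus rho ->
  admissible_system 3 I (fun _ => rho) ->
  exists beta, 0 < beta /\ forall T, 0 <= T -> rho T = beta * exp (- (beta * T)).
Proof.
  intros H12 H23 Hinc Hcont Hpos [_ Htail] Hadm.
  destruct (Hadm 1%nat ltac:(lia) ltac:(lia)) as [_ [Sa [_ [HSa Hpair12]]]].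
  destruct (Hadm 2%nat ltac:(lia) ltac:(lia)) as [_ [Sb [_ [HSb Hpair23]]]].
  set (a := I 2%nat - I 1%nat) in *. set (b := I 3%nat - I 2%nat) in *.
  assert (Hshift_a : forall T, 0 <= T -> rho (T + a) = Sa * rho T)
    by (intros T HT; rewrite (Hpair12 T HT); field; lra).
  assert (Hshift_b : forall T, 0 <= T -> rho (T + b) = Sb * rho T)
    by (intros T HT; rewrite (Hpair23 T HT); field; lra).
  replace (I 3%nat - I 1%nat) with (a + b) in Hinc by (unfold a, b; ring).
  pose proof (shift_laws_exponential rho a b Sa Sb ltac:(unfold a; lra)
    ltac:(unfold b; lra) Hinc Hcont Hpos Hshift_a Hshift_b) as Hexp.
  destruct (exponential_density rho (rho 0) (ln Sa / a)
    (Hpos 0 (Rle_refl 0)) Hexp Htail) as [Hc Hrho0].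
  exists (- (ln Sa / a)). split; [lra|].
  intros T HT. rewrite Hexp, Hrho0 by exact HT. do 3 f_equal. ring.
Qed.
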